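(* Let $f\colon Y\to X$ be a morphism of schemes, let $y\in Y$ and $x=f(y)$. If $f$ is submersive at $y$ and $Y$ is regular at $y$, then $X$ is regular at $x$.
   Context: $f$ is submersive at $y$ if the natural map $\kappa(y)\otimes_{\kappa(x)}\mathfrak{m}_x/\mathfrak{m}_x^2\to\mathfrak{m}_y/\mathfrak{m}_y^2$ is injective, where $\mathfrak{m}_x,\mathfrak{m}_y$ are the maximal ideals of $\mathcal{O}_{X,x},\mathcal{O}_{Y,y}$ and $\kappa(\cdot)$ the residue fields. A scheme is regular at a point if its local ring $(R,\mathfrak{m})$ there satisfies: the natural surjection $\operatorname{Sym}_{R/\mathfrak{m}}(\mathfrak{m}/\mathfrak{m}^2)\to\bigoplus_{d\ge0}\mathfrak{m}^d/\mathfrak{m}^{d+1}$ is an isomorphism (no Noetherian hypothesis). *)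

From HB Require Import structures.
From mathcomp Require Import all_boot all_algebra.
From mathcomp Require Import mpoly.
From Stdlib Require List.

Set Implicit Arguments.
Unset Strict Implicit.
Unset Printing Implicit Defensive.

Import GRing.Theory.
Local Open Scope ring_scope.

(* A local ring is modelled as a (nonzero) commutative ring with units in which
   the non-units are closed under addition; its unique maximal ideal is then
   the set of non-units.  *)
Definition local_ring (R : comUnitRingType) : Prop :=
  forall x y : R, x \isn't a GRing.unit -> y \isn't a GRing.unit ->
    x + y \isn't a GRing.unit.

Definition in_max (R : comUnitRingType) (x : R) : Prop := x \isn't a GRing.unit.

Definition in_maxpow (R : comUnitRingType) (d : nat) (x : R) : Prop :=
  exists s : seq (R * seq R),
    (forall p, List.In p s -> size p.2 = d /\ forall a, List.In a p.2 -> in_max a) /\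
    x = \sum_(p <- s) p.1 * \prod_(a <- p.2) a.

Definition local_hom (A B : comUnitRingType) (phi : {rmorphism A -> B}) : Prop :=
  forall a : A, in_max a -> in_max (phi a).

(* Generators of the ideal I_u of A[X_0..X_(n-1)] presenting
   Sym_{A/m}(W_u), where W_u is the subspace of m/m^2 spanned by the classes of
   u_0, ..., u_(n-1) (all u_i in m):
   - constants c with c in m (reduction of coefficients to kappa = A/m),
   - linear forms sum_i a_i X_i with sum_i a_i u_i in m^2 (the linear relations
     among the classes [u_i] in m/m^2). *)
Definition sym_rel (A : comUnitRingType) (n : nat) (u : 'I_n -> A)
    (r : {mpoly A[n]}) : Prop :=
  (exists c : A, in_max c /\ r = c%:MP) \/
  (exists a : 'I_n -> A, in_maxpow 2 (\sum_i a i * u i) /\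
                         r = \sum_i a i *: 'X_i).

(* P lies in the ideal generated by the relations above, i.e. its class in
   Sym_{A/m}(m/m^2) (via X_i |-> [u_i]) is zero. *)
Definition sym_zero (A : comUnitRingType) (n : nat) (u : 'I_n -> A)
    (P : {mpoly A[n]}) : Prop :=
  exists s : seq ({mpoly A[n]} * {mpoly A[n]}),
    (forall p, List.In p s -> sym_rel u p.2) /\
    P = \sum_(p <- s) p.1 * p.2.

(* Regularity of a local ring (A, m) without Noetherian hypothesis:
   the natural surjection Sym_{A/m}(m/m^2) -> (+)_d m^d/m^(d+1) is an
   isomorphism, i.e. (being a surjective graded map) it is injective in every
   degree d: a homogeneous degree-d polynomial expression P in elements
   u_0..u_(n-1) of m whose value P(u) lies in m^(d+1) is zero in Sym. *)
Definition regular_local (A : comUnitRingType) : Prop :=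
  forall (d n : nat) (u : 'I_n -> A), (forall i, in_max (u i)) ->
  forall P : {mpoly A[n]}, P \is d.-homog ->
    in_maxpow d.+1 P.@[u] -> sym_zero u P.

(* Submersivity of a local homomorphism phi : (A, m_A) -> (B, m_B):
   kappa_B (x)_{kappa_A} m_A/m_A^2 -> m_B/m_B^2 is injective.  An element of the
   source is sum_i [b_i] (x) [a_i] with a_i in m_A; it maps to the class of
   sum_i b_i phi(a_i).  It is zero in the tensor product iff the vector
   ([b_i])_i in kappa_B^n lies in the kappa_B-span of the relation vectors
   ([phi c_i])_i, where sum_i c_i a_i in m_A^2 (since
   kappa_B (x) (kappa_A^n / R) = kappa_B^n / kappa_B R). *)
Definition submersive (A B : comUnitRingType) (phi : {rmorphism A -> B}) : Prop :=
  forall (n : nat) (a : 'I_n -> A) (b : 'I_n -> B),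
    (forall i, in_max (a i)) ->
    in_maxpow 2 (\sum_i b i * phi (a i)) ->
    exists s : seq (B * ('I_n -> A)),
      (forall p, List.In p s -> in_maxpow 2 (\sum_i p.2 i * a i)) /\
      (forall i, in_max (b i - \sum_(p <- s) p.1 * phi (p.2 i))).

From HB Require Import structures.
From mathcomp Require Import all_boot all_algebra.
From mathcomp Require Import mpoly ring.
From Stdlib Require List.

(* Let u_0, ..., u_(n-1) lie in m_A and let J be the ideal of A[X] presenting
   Sym(m_A/m_A^2) along X_i |-> [u_i].  If P(u) lies in m_A^(d+1), regularity
   of B puts phi(P) in the corresponding ideal for the phi(u_i); by
   submersivity the linear relations among the [phi(u_i)] in m_B/m_B^2 come,
   up to m_B, from linear forms of J.  So phi(P) lies in the ideal of B[X]
   generated by m_B and the images of the linear forms of J, and it remains to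
   descend: such a P lies in J.  This is Gaussian elimination over the residue
   fields.  A form whose coefficients all lie in m_A maps into m_B B[X].  A form
   with a unit coefficient at X_i, scaled to a form L with coefficient 1 there,
   is eliminated by the substitution X_i |-> X_i - L, which changes P only by a multiple of L, kills the image of
   L and keeps the other forms linear forms of J.  Finally, if phi(P) has all
   its coefficients in m_B then P has all its coefficients in m_A, since ring
   maps preserve units. *)

Set Implicit Arguments.
Unset Strict Implicit.
Unset Printing Implicit Defensive.

Import GRing.Theory.
Local Open Scope ring_scope.

Definition in_ideal (R : pzSemiRingType) (G : R -> Prop) (x : R) : Prop :=
  exists s : seq (R * R),
    (forall p, List.In p s -> G p.2) /\ x = \sum_(p <- s) p.1 * p.2.

Section Ideal.
Variable R : pzSemiRingType.
Implicit Types (G : R -> Prop) (x y : R).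

Lemma in_ideal0 G : in_ideal G 0.
Proof. by exists [::]; rewrite big_nil. Qed.

Lemma in_idealD G x y : in_ideal G x -> in_ideal G y -> in_ideal G (x + y).
Proof.
move=> [s [Gs ->]] [t [Gt ->]]; exists (s ++ t); rewrite big_cat.
by split=> // p /List.in_app_iff[/Gs|/Gt].
Qed.

Lemma in_idealMl G q x : in_ideal G x -> in_ideal G (q * x).
Proof.
move=> [s [Gs ->]]; exists [seq (q * p.1, p.2) | p <- s]; split.
  by move=> _ /List.in_map_iff[p [<- /Gs]].
by rewrite big_map mulr_sumr; apply: eq_bigr => p _; rewrite mulrA.
Qed.

Lemma in_ideal_gen G r : G r -> in_ideal G r.
Proof. by exists [:: (1, r)]; rewrite big_seq1 mul1r; split=> // p [<-|]. Qed.

Lemma in_ideal_sum G (I : Type) (s : seq I) (F : I -> R) :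
  (forall i, List.In i s -> in_ideal G (F i)) -> in_ideal G (\sum_(i <- s) F i).
Proof.
elim: s => [|i s IHs] Fs; first by rewrite big_nil; apply: in_ideal0.
rewrite big_cons; apply: in_idealD; first by apply: Fs; left.
by apply: IHs => j sj; apply: Fs; right.
Qed.

Lemma in_ideal_trans G G' x :
  (forall r, G r -> in_ideal G' r) -> in_ideal G x -> in_ideal G' x.
Proof.
move=> GG' [s [Gs ->]]; apply: in_ideal_sum => p sp.
by apply: in_idealMl; apply: GG'; apply: Gs.
Qed.

Lemma in_idealU G G' x :
  in_ideal (fun r => G r \/ G' r) x ->
  exists y z, [/\ in_ideal G y, in_ideal G' z & x = y + z].
Proof.
move=> [s [Gs ->]]; elim: s Gs => [|p s IHs] Gs.
  by exists 0, 0; rewrite big_nil addr0; split=> //; apply: in_ideal0.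
rewrite big_cons; have [|y [z [Gy G'z ->]]] := IHs.
  by move=> q sq; apply: Gs; right.
case: (Gs p (or_introl erefl)) => [Gp|G'p].
  exists (p.1 * p.2 + y), z; rewrite addrA; split=> //.
  by apply: in_idealD => //; apply/in_idealMl/in_ideal_gen.
exists y, (p.1 * p.2 + z); rewrite addrCA; split=> //.
by apply: in_idealD => //; apply/in_idealMl/in_ideal_gen.
Qed.

End Ideal.

Lemma in_ideal_rmorph (R S : pzSemiRingType) (f : {rmorphism R -> S})
    (G : R -> Prop) (G' : S -> Prop) x :
  (forall r, G r -> G' (f r)) -> in_ideal G x -> in_ideal G' (f x).
Proof.
move=> GG' [s [Gs ->]]; exists [seq (f p.1, f p.2) | p <- s]; split.
  by move=> _ /List.in_map_iff[p [<- /Gs/GG']].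
by rewrite rmorph_sum big_map; apply: eq_bigr => p _; rewrite rmorphM.
Qed.

Section LocalRing.
Variable R : comUnitRingType.

Lemma in_maxMl (x c : R) : in_max c -> in_max (x * c).
Proof. by rewrite /in_max unitrM => /negbTE->; rewrite andbF. Qed.

Lemma in_max_sum (I : Type) (s : seq I) (F : I -> R) : local_ring R ->
  (forall i, List.In i s -> in_max (F i)) -> in_max (\sum_(i <- s) F i).
Proof.
move=> locR; elim: s => [|i s IHs] Fs; first by rewrite big_nil /in_max unitr0.
rewrite big_cons; apply: locR; first by apply: Fs; left.
by apply: IHs => j sj; apply: Fs; right.
Qed.

End LocalRing.

Lemma in_maxpow_rmorph (A B : comUnitRingType) (phi : {rmorphism A -> B}) k x :
  local_hom phi -> in_maxpow k x -> in_maxpow k (phi x).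
Proof.
move=> phi_local [s [s_max ->]].
exists [seq (phi p.1, map phi p.2) | p <- s]; split.
  move=> _ /List.in_map_iff[p [<- /s_max[size_p p_max]]]; rewrite /= size_map.
  by split=> // _ /List.in_map_iff[a [<- /p_max]]; apply: phi_local.
rewrite rmorph_sum big_map; apply: eq_bigr => p _.
by rewrite rmorphM rmorph_prod big_map.
Qed.

Section MpolyInd.
Variables (n : nat) (R : nzRingType).

Lemma mpoly_ring_ind (Q : {mpoly R[n]} -> Prop) :
  (forall c, Q c%:MP) -> (forall i, Q 'X_i) ->
  (forall p q, Q p -> Q q -> Q (p + q)) ->
  (forall p q, Q p -> Q q -> Q (p * q)) -> forall p, Q p.
Proof.
move=> QC QX QD QM p; rewrite [p]mpolyE.
have Q1 : Q 1 by rewrite -mpolyC1.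
apply: (big_ind Q) => [||m _]; [by rewrite -mpolyC0 | exact: QD | ].
rewrite -mul_mpolyC mpolyXE_id; apply: (QM _ _ (QC _)).
apply: (big_ind Q) => [||i _]; [exact: Q1 | exact: QM | ].
by elim: (m i) => [|k IHk]; rewrite ?expr0 // exprS; apply: (QM).
Qed.

Lemma mpoly_rmorph_eq (S : nzRingType) (f g : {rmorphism {mpoly R[n]} -> S}) :
  (forall c, f c%:MP = g c%:MP) -> (forall i, f 'X_i = g 'X_i) -> f =1 g.
Proof.
move=> fgC fgX; elim/mpoly_ring_ind => // p q fgp fgq.
  by rewrite !rmorphD /= fgp fgq.
by rewrite !rmorphM /= fgp fgq.
Qed.

End MpolyInd.

Lemma meval_map_mpoly (n : nat) (R S : comNzRingType) (f : {rmorphism R -> S})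
    (u : 'I_n -> R) (p : {mpoly R[n]}) :
  (map_mpoly f p).@[fun i => f (u i)] = f p.@[u].
Proof.
apply: (@mpoly_rmorph_eq _ _ _ (meval (fun i => f (u i)) \o map_mpoly f)
                               (f \o meval u)) => [c|i] /=.
  by rewrite map_mpolyC !mevalC.
by rewrite map_mpolyX !mevalXU.
Qed.

Lemma map_mpoly_homog (R S : nzRingType) (f : {additive R -> S}) (n d : nat)
    (p : {mpoly R[n]}) :
  p \is d.-homog -> map_mpoly f p \is d.-homog.
Proof.
move=> /dhomogP hp; apply/dhomogP => m; rewrite mcoeff_msupp mcoeff_map_mpoly => fpm.
by apply: hp; rewrite mcoeff_msupp; apply: contra fpm => /eqP->; rewrite raddf0.
Qed.

Definition linform (R : nzRingType) (n : nat) (a : 'I_n -> R) : {mpoly R[n]} :=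
  \sum_i a i *: 'X_i.

Lemma linform_subZ (R : comNzRingType) (n : nat) (v w : 'I_n -> R) (k : R) :
  linform (fun j => v j - k * w j) = linform v - k *: linform w.
Proof.
rewrite /linform scaler_sumr -sumrB; apply: eq_bigr => j _.
by rewrite scalerBl scalerA.
Qed.

Lemma map_linform (R S : nzRingType) (f : {rmorphism R -> S}) (n : nat)
    (a : 'I_n -> R) :
  map_mpoly f (linform a) = linform (fun i => f (a i)).
Proof.
by rewrite /linform raddf_sum /=; apply: eq_bigr => i _; rewrite map_mpolyZ map_mpolyX.
Qed.

Lemma in_idealZ (R : comNzRingType) (n : nat) (G : {mpoly R[n]} -> Prop) c F :
  in_ideal G F -> in_ideal G (c *: F).
Proof. by rewrite -mul_mpolyC; apply: in_idealMl. Qed.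

Definition max_const {R : comUnitRingType} {n : nat} (r : {mpoly R[n]}) : Prop :=
  exists c, in_max c /\ r = c%:MP.

Section MaxConst.
Variables (R : comUnitRingType) (n : nat).
Implicit Type p : {mpoly R[n]}.

Lemma in_ideal_max_const_coef p :
  local_ring R -> in_ideal max_const p -> forall m, in_max p@_m.
Proof.
move=> locR [s [Cs ->]] m; rewrite raddf_sum; apply: in_max_sum => // q sq.
by have [c [mc ->]] := Cs q sq; rewrite /= mulrC mcoeffCM mulrC; apply: in_maxMl.
Qed.

Lemma coef_in_ideal_max_const p :
  (forall m, in_max p@_m) -> in_ideal max_const p.
Proof.
move=> mp; rewrite [p]mpolyE; apply: in_ideal_sum => m _.
by rewrite -mul_mpolyC mulrC; apply/in_idealMl/in_ideal_gen; exists p@_m.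
Qed.

Lemma linform_max_const (a : 'I_n -> R) :
  (forall i, in_max (a i)) -> in_ideal max_const (linform a).
Proof.
move=> ma; apply: in_ideal_sum => i _.
by rewrite -mul_mpolyC mulrC; apply/in_idealMl/in_ideal_gen; exists (a i).
Qed.

End MaxConst.

Section Pivot.
Variables (R : comNzRingType) (n : nat).
Implicit Types (L F : {mpoly R[n]}).

Definition substX (i : 'I_n) L : n.-tuple {mpoly R[n]} :=
  [tuple if j == i then 'X_i - L else 'X_j | j < n].

Lemma comp_substX_X i L j :
  'X_j \mPo substX i L = if j == i then 'X_i - L else 'X_j.
Proof. by rewrite comp_mpolyXU -tnth_nth tnth_mktuple. Qed.

Lemma comp_substX_linform i L (v : 'I_n -> R) :
  linform v \mPo substX i L = linform v - v i *: L.
Proof.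
rewrite raddf_sum /=.
transitivity (\sum_j (v j *: 'X_j - (if j == i then v i *: L else 0))).
  apply: eq_bigr => j _; rewrite comp_mpolyZ comp_substX_X.
  by case: eqP => [->|_]; rewrite ?subr0 // scalerBr.
by rewrite sumrB -big_mkcond big_pred1_eq.
Qed.

Lemma comp_substX_modL i L F : exists r, F = F \mPo substX i L + r * L.
Proof.
elim/mpoly_ring_ind: F => [c|j|p q [r1 e1] [r2 e2]|p q [r1 e1] [r2 e2]].
- by exists 0; rewrite comp_mpolyC mul0r addr0.
- rewrite comp_substX_X; case: eqP => [->|_]; first by exists 1; ring.
  by exists 0; rewrite mul0r addr0.
- by exists (r1 + r2); rewrite raddfD {1}e1 {1}e2; ring.
- exists (r1 * (q \mPo substX i L) + (p \mPo substX i L) * r2 + r1 * r2 * L).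
  by rewrite rmorphM /= {1}e1 {1}e2; ring.
Qed.

End Pivot.

Lemma map_comp_substX (R S : comNzRingType) (f : {rmorphism R -> S}) (n : nat)
    (i : 'I_n) (L F : {mpoly R[n]}) :
  map_mpoly f (F \mPo substX i L) = map_mpoly f F \mPo substX i (map_mpoly f L).
Proof.
apply: (@mpoly_rmorph_eq _ _ _ (map_mpoly f \o comp_mpoly (substX i L))
           (comp_mpoly (substX i (map_mpoly f L)) \o map_mpoly f)) => [c|j] /=.
  by rewrite map_mpolyC !comp_mpolyC map_mpolyC.
by rewrite map_mpolyX !comp_substX_X; case: eqP; rewrite ?rmorphB /= map_mpolyX.
Qed.

Section Descent.
Variables (A B : comUnitRingType) (phi : {rmorphism A -> B}) (n : nat).
Hypotheses (locB : local_ring B) (phi_local : local_hom phi).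
Variable G : {mpoly A[n]} -> Prop.
Hypothesis G_max_const : forall r, max_const r -> G r.

Definition base_change_lin (r : {mpoly B[n]}) : Prop :=
  exists a, in_ideal G (linform a) /\ r = map_mpoly phi (linform a).

Definition base_change_rel (r : {mpoly B[n]}) : Prop :=
  max_const r \/ base_change_lin r.

Lemma base_change_lin_comp_substX (a : 'I_n -> A) i r :
  in_ideal G (linform a) -> base_change_lin r ->
  base_change_lin (r \mPo substX i (map_mpoly phi ((a i)^-1 *: linform a))).
Proof.
move=> Ja [w [Jw ->]]; exists (fun j => w j - w i / a i * a j).
rewrite linform_subZ -map_comp_substX comp_substX_linform scalerA; split=> //.
by apply: in_idealD Jw _; rewrite -scaleNr; apply: in_idealZ.
Qed.

Lemma base_change_descent_max_const P :
  in_ideal max_const (map_mpoly phi P) -> in_ideal G P.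
Proof.
move=> /(in_ideal_max_const_coef locB) mP.
apply: in_ideal_trans (fun r Cr => in_ideal_gen (G_max_const Cr)) _.
apply: coef_in_ideal_max_const => m; have := mP m.
by rewrite mcoeff_map_mpoly; apply: contra; apply: rmorph_unit.
Qed.

Lemma base_change_descent_decomp (s : seq ({mpoly B[n]} * {mpoly B[n]})) P M :
  (forall p, List.In p s -> base_change_lin p.2) -> in_ideal max_const M ->
  map_mpoly phi P = \sum_(p <- s) p.1 * p.2 + M -> in_ideal G P.
Proof.
have [k] := ubnP (size s).
elim: k s P M => // k IHk [|[q r] s] P M /= sz_s s_lin CM.
  by rewrite big_nil add0r => ePM; apply: base_change_descent_max_const; rewrite ePM.
have s_lin' p : List.In p s -> base_change_lin p.2 by move=> sp; apply: s_lin; right.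
have [a [Ja /= ->]] := s_lin _ (or_introl erefl); rewrite big_cons /= => ePM.
have [/existsP[i ai_unit]|/existsPn ma] :=
  boolP [exists i, a i \is a GRing.unit]; last first.
  apply: (IHk s P (q * map_mpoly phi (linform a) + M)) => //.
    apply/in_idealD/CM/in_idealMl; rewrite map_linform.
    by apply: linform_max_const => i; apply: phi_local; apply: ma.
  by rewrite ePM; ring.
set L := (a i)^-1 *: linform a; set t := substX i (map_mpoly phi L).
have [r' ->] := comp_substX_modL i L P.
apply: in_idealD (in_idealMl _ (in_idealZ _ Ja)).
apply: (IHk [seq (p.1 \mPo t, p.2 \mPo t) | p <- s] _ (M \mPo t)).
- by rewrite size_map.
- by move=> _ /List.in_map_iff[p [<- /s_lin']]; apply: base_change_lin_comp_substX.
- by apply: in_ideal_rmorph CM => _ [c [mc ->]]; exists c; rewrite /= comp_mpolyC.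
have pivot_killed : map_mpoly phi (linform a) \mPo t = 0.
  rewrite -map_comp_substX comp_substX_linform scalerA mulrV //.
  by rewrite scale1r subrr rmorph0.
rewrite map_comp_substX ePM !rmorphD rmorphM /= pivot_killed mulr0 add0r.
by rewrite rmorph_sum big_map; congr (_ + _); apply: eq_bigr => p _; rewrite rmorphM.
Qed.

Lemma base_change_descent P :
  in_ideal base_change_rel (map_mpoly phi P) -> in_ideal G P.
Proof.
move=> /in_idealU[M [X [CM [s [s_lin eX]] ePM]]].
by apply: (base_change_descent_decomp s_lin CM); rewrite ePM eX addrC.
Qed.

End Descent.

Lemma submersive_sym_rel (A B : comUnitRingType) (phi : {rmorphism A -> B})
    (n : nat) (u : 'I_n -> A) :
  submersive phi -> (forall i, in_max (u i)) ->
  forall r, sym_rel (fun i => phi (u i)) r ->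
    in_ideal (base_change_rel phi (sym_rel u)) r.
Proof.
move=> sub u_max r [Cr|[b [b_rel ->]]]; first by apply: in_ideal_gen; left.
have [s [s_rel e_max]] := sub n u b u_max b_rel.
pose e i := b i - \sum_(p <- s) p.1 * phi (p.2 i).
have -> : \sum_i b i *: 'X_i =
    \sum_(p <- s) p.1%:MP * map_mpoly phi (linform p.2) + linform e.
  apply/esym; under eq_bigr do rewrite map_linform mul_mpolyC /linform scaler_sumr.
  rewrite /linform exchange_big -big_split /=; apply: eq_bigr => i _.
  by under eq_bigr do rewrite scalerA; rewrite -scaler_suml -scalerDl /e addrC subrK.
apply: in_idealD; last first.
  by apply: in_ideal_trans (linform_max_const e_max) => ? ?; apply: in_ideal_gen; left.
apply: in_ideal_sum => p sp; apply/in_idealMl/in_ideal_gen; right.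
exists p.2; split=> //.
by apply/in_ideal_gen; right; exists p.2; split=> //; apply: s_rel.
Qed.

Theorem lemma3p13 (A B : comUnitRingType) (phi : {rmorphism A -> B}) :
  local_ring A -> local_ring B -> local_hom phi ->
  submersive phi -> regular_local B -> regular_local A.
Proof.
move=> _ locB phi_local sub regB d n u u_max P hP Pu_max.
apply: (base_change_descent locB phi_local (G := sym_rel u) (fun r Cr => or_introl Cr)).
apply: in_ideal_trans (submersive_sym_rel sub u_max) _.
apply: regB (map_mpoly_homog _ hP) _ => [i|]; first exact: phi_local.
by rewrite meval_map_mpoly; apply: in_maxpow_rmorph.
Qed.
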